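(* Let $\rho_0$ be an $n$-qubit density matrix and let $\mathcal{E}$ be a locally scrambling ensemble of $n$-qubit unitaries. For $U\sim\mathcal{E}$ set $\rho=U\rho_0U^\dagger$. Let $g$ be an $n$-qubit Pauli operator (a tensor product of single-qubit Paulis $\mathds{1},X,Y,Z$, not the identity) with support $A=\mathrm{supp}(g)\subseteq[n]$, and let $\rho_A=\mathrm{Tr}_{[n]\setminus A}\rho$ be the reduced state on $A$. Then $$\mathbf{E}_{U\sim\mathcal{E}}\,[\mathrm{Tr}(g\rho)]^2\;\le\;\left(\tfrac{2}{3}\right)^{|A|}\,\mathbf{E}_{U\sim\mathcal{E}}\,D_{\rm HS}^2(\rho_A),$$ where $D_{\rm HS}(\rho_A):=\big\|\rho_A-\mathds{1}/2^{|A|}\big\|_{F}$ is the Frobenius (Hilbert–Schmidt) distance of $\rho_A$ to the maximally mixed state on $A$.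
   Context: An ensemble $\mathcal{E}$ of $n$-qubit unitaries (a probability distribution over unitaries, with expectation $\mathbf{E}_{U\sim\mathcal{E}}$) is called locally scrambling if for every tensor product $\bigotimes_{j=1}^n V_j$ of single-qubit Clifford gates, $U\sim\mathcal{E}$ implies $(\bigotimes_j V_j)U\sim\mathcal{E}$, i.e. $(\bigotimes_j V_j)U$ has the same distribution as $U$. The support $\mathrm{supp}(g)$ of a Pauli string is the set of qubits on which it acts non-trivially. *)

From HB Require Import structures.
From mathcomp Require Import all_boot all_order all_algebra.
From mathcomp Require Import all_classical all_reals all_analysis.
From mathcomp Require Import complex.
Set Implicit Arguments. Unset Strict Implicit. Unset Printing Implicit Defensive.
Import Order.TTheory GRing.Theory Num.Theory.
Local Open Scope ring_scope.
Local Open Scope classical_set_scope.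

Section QuantumDefs.
Variable R : realType.
Local Notation C := (R[i]).

Definition qconf (n : nat) := {ffun 'I_n -> 'I_2}.

(* n-qubit operators: (2^n) x (2^n) matrices indexed by bit strings *)
Definition op (n : nat) := 'M[C]_#|qconf n|.

Definition adj (m p : nat) (M : 'M[C]_(m, p)) : 'M[C]_(p, m) :=
  (map_mx Num.conj M)^T.

Definition unitary (m : nat) (M : 'M[C]_m) : Prop := M *m adj M = 1%:M.

Definition density (m : nat) (M : 'M[C]_m) : Prop :=
  [/\ adj M = M,
      forall v : 'rV[C]_m, 0 <= (v *m M *m adj v) 0 0
    & \tr M = 1].

Definition tensor (n : nat) (V : 'I_n -> 'M[C]_2) : op n :=
  \matrix_(i, j) \prod_(k < n) V k ((enum_val i : qconf n) k) ((enum_val j : qconf n) k).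

Definition pauliX : 'M[C]_2 := \matrix_(i, j) (if i == j then 0 else 1).
Definition pauliY : 'M[C]_2 :=
  \matrix_(i, j) (if i == j then 0 else if i == 0 then - 'i else 'i)%C.
Definition pauliZ : 'M[C]_2 :=
  \matrix_(i, j) (if i == j then (if i == 0 then 1 else -1) else 0).
Definition pauli1 (a : 'I_4) : 'M[C]_2 :=
  match val a with 0 => 1%:M | 1 => pauliX | 2 => pauliY | _ => pauliZ end.

Definition pauli (n : nat) (p : {ffun 'I_n -> 'I_4}) : op n :=
  tensor (fun k => pauli1 (p k)).
Definition supp (n : nat) (p : {ffun 'I_n -> 'I_4}) : {set 'I_n} :=
  [set k | p k != 0].

Definition hadamard : 'M[C]_2 :=
  (((Num.sqrt 2)^-1)%:C)%C%:M *m
  \matrix_(i, j) (if (i == 1) && (j == 1) then -1 else 1).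
Definition phaseS : 'M[C]_2 :=
  \matrix_(i, j) (if i == j then (if i == 0 then 1 else 'i%C) else 0).
Inductive clifford1 : 'M[C]_2 -> Prop :=
| cliff_H : clifford1 hadamard
| cliff_S : clifford1 phaseS
| cliff_mul U V : clifford1 U -> clifford1 V -> clifford1 (U *m V).

(* bit strings supported on S (zero outside S): basis of the subsystem S *)
Definition cfg (n : nat) (S : {set 'I_n}) :=
  {x : qconf n | [forall k, (k \notin S) ==> (x k == ord0)]}.

Definition join (n : nat) (A : {set 'I_n}) (a b : qconf n) : qconf n :=
  [ffun k => if k \in A then a k else b k].

Definition ptrace (n : nat) (A : {set 'I_n}) (rho : op n)
  : 'M[C]_#|{: cfg A}| :=
  \matrix_(i, j) \sum_(b : {: cfg (~: A)})
     rho (enum_rank (join A (val (enum_val i : cfg A)) (val b)))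
         (enum_rank (join A (val (enum_val j : cfg A)) (val b))).

Definition frob (m : nat) (M : 'M[C]_m) : R :=
  Num.sqrt (complex.Re (\tr (M *m adj M))).

Definition DHS (n : nat) (A : {set 'I_n}) (rhoA : 'M[C]_#|{: cfg A}|) : R :=
  frob (rhoA - ((2 ^ #|A|)%:R^-1 : C)%:M).

(* sigma-algebra on operators generated by the real and imaginary parts of
   the matrix entries (the Borel sigma-algebra of C^(d x d)) *)
Definition op_gen (n : nat) : set (set (op n)) :=
  [set S | exists i j (B : set R), measurable B /\
     (S = (fun M : op n => complex.Re (M i j)) @^-1` B \/
      S = (fun M : op n => complex.Im (M i j)) @^-1` B)].

Definition random_op (d : measure_display) (Omega : measurableType d)
  (n : nat) (X : Omega -> op n) : Prop :=
  forall i j, measurable_fun setT (fun w => complex.Re (X w i j)) /\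
              measurable_fun setT (fun w => complex.Im (X w i j)).

Definition same_distribution (d : measure_display) (Omega : measurableType d)
  (P : probability Omega R) (n : nat) (X Y : Omega -> op n) : Prop :=
  forall S : set (op n), <<s @op_gen n >> S -> P (X @^-1` S) = P (Y @^-1` S).

Definition unitary_ensemble (d : measure_display) (Omega : measurableType d)
  (P : probability Omega R) (n : nat) (U : Omega -> op n) : Prop :=
  random_op U /\ forall w, unitary (U w).

Definition locally_scrambling (d : measure_display) (Omega : measurableType d)
  (P : probability Omega R) (n : nat) (U : Omega -> op n) : Prop :=
  forall V : 'I_n -> 'M[C]_2, (forall k, clifford1 (V k)) ->
    same_distribution P (fun w => tensor V *m U w) U.

End QuantumDefs.

(* Conjugating a single-qubit Pauli by a Clifford gate maps it to +/- any other
   non-identity Pauli (Hadamard swaps X and Z, the phase gate swaps X and Y), so a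
   tensor product of single-qubit Cliffords maps a Pauli string to +/- any other
   string with the same support A.  By local scrambling, all 3^|A| such strings q
   have the same E[Tr(q rho)^2].  For each of them Tr(q rho) = Tr(q_A (rho_A - 1/2^|A|)),
   because q_A is traceless, and the Pauli strings on A are an orthogonal basis with
   Tr(q_A q'_A^dagger) = 2^|A| [q = q'], so summing the squares over all of them
   gives at most 2^|A| D_HS(rho_A)^2.  Hence 3^|A| E[Tr(g rho)^2] <= 2^|A| E[D_HS^2]. *)

From HB Require Import structures.
From mathcomp Require Import all_boot all_order all_algebra.
From mathcomp Require Import all_classical all_reals all_analysis.
From mathcomp Require Import measurable_realfun complex.
From mathcomp Require Import ring.
Import Order.TTheory GRing.Theory Num.Theory.
Set Implicit Arguments. Unset Strict Implicit. Unset Printing Implicit Defensive.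
Local Open Scope ring_scope.

Section ComplexMatrices.
Variable R : realType.
Local Notation C := (R[i]).

Lemma Re_realM (x : R) (z : C) : complex.Re ((x%:C)%C * z) = x * complex.Re z.
Proof. by case: z => a b /=; rewrite mul0r subr0. Qed.

Lemma Re_mul_conj (z : C) :
  complex.Re (z * Num.conj z) = complex.Re z ^+ 2 + complex.Im z ^+ 2.
Proof. by case: z => a b /=; ring. Qed.

Lemma adjM m p q (M : 'M[C]_(m, p)) (N : 'M[C]_(p, q)) :
  adj (M *m N) = adj N *m adj M.
Proof. by rewrite /adj map_mxM trmx_mul. Qed.

Lemma adj_scalar m (c : C) : adj (c%:M : 'M[C]_m) = (Num.conj c)%:M.
Proof.
apply/matrixP => i j; rewrite !mxE eq_sym.
by case: (i == j); rewrite ?rmorph0 ?mulr1n ?mulr0n.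
Qed.

Definition conj_by m (V M : 'M[C]_m) := adj V *m M *m V.

Lemma conj_byM m (V W M : 'M[C]_m) : conj_by (V *m W) M = conj_by W (conj_by V M).
Proof. by rewrite /conj_by adjM !mulmxA. Qed.

Lemma conj_byZ m (V M : 'M[C]_m) c : conj_by V (c *: M) = c *: conj_by V M.
Proof. by rewrite /conj_by -scalemxAr -scalemxAl. Qed.

Lemma conj_by_scalar_mul m (c : C) (V M : 'M[C]_m) : Num.conj c = c ->
  conj_by (c%:M *m V) M = (c * c) *: conj_by V M.
Proof.
move=> cc; rewrite /conj_by adjM adj_scalar cc mul_mx_scalar mul_scalar_mx.
by rewrite -scalemxAr -!scalemxAl scalerA.
Qed.

Lemma Re_trace_mul_adj m (M : 'M[C]_m) :
  complex.Re (\tr (M *m adj M)) = \sum_i \sum_j complex.Re (M j i * Num.conj (M j i)).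
Proof.
rewrite /mxtrace raddf_sum exchange_big; apply: eq_bigr => i _.
by rewrite mxE raddf_sum; apply: eq_bigr => j _; rewrite !mxE.
Qed.

Lemma frob_sqr m (M : 'M[C]_m) : frob M ^+ 2 = complex.Re (\tr (M *m adj M)).
Proof.
rewrite /frob sqr_sqrtr // Re_trace_mul_adj.
by do 2!apply: sumr_ge0 => ? _; rewrite Re_mul_conj addr_ge0 ?sqr_ge0.
Qed.

End ComplexMatrices.

Section PauliAlgebra.
Variable R : realType.
Local Notation C := (R[i]).

Lemma ord2_cases (k : 'I_2) : k = 0 \/ k = 1.
Proof. by case: k => [[|[|//]]] ?; [left | right]; apply/val_inj. Qed.

Lemma big_ord2 (F : 'I_2 -> C) : \sum_(i < 2) F i = F 0 + F 1.
Proof. by rewrite big_ord_recl big_ord1; congr (F _ + F _); apply/val_inj. Qed.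

Lemma matrix2P (M N : 'M[C]_2) :
  M 0 0 = N 0 0 -> M 0 1 = N 0 1 -> M 1 0 = N 1 0 -> M 1 1 = N 1 1 -> M = N.
Proof.
move=> e00 e01 e10 e11; apply/matrixP => i j.
by case: (ord2_cases i) => ->; case: (ord2_cases j) => ->.
Qed.

(* Dropping the factor 1/sqrt 2 keeps square roots out of the 2x2 computations below. *)
Definition hadamard_unnormalized : 'M[C]_2 :=
  \matrix_(i, j) (if (i == 1) && (j == 1) then -1 else 1).

Lemma conj_by_hadamard (M N : 'M[C]_2) :
  conj_by hadamard_unnormalized M = 2 *: N -> conj_by (hadamard R) M = N.
Proof.
set c : C := (((Num.sqrt 2)^-1)%:C)%C.
have cc : Num.conj c = c by exact: conjc_real.
have c2 : c * c * 2 = 1.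
  rewrite /c -rmorphM /= -invfM -expr2 sqr_sqrtr ?ler0n //.
  by apply/eqP; rewrite eq_complex /=; apply/andP; split; apply/eqP; field.
move=> e; rewrite -[hadamard R]/(c%:M *m hadamard_unnormalized).
by rewrite conj_by_scalar_mul // e scalerA c2 scale1r.
Qed.

Ltac solve_mx2 := apply: matrix2P; rewrite !mxE !big_ord2 !mxE !big_ord2 !mxE /=;
  apply/eqP; rewrite eq_complex /=; apply/andP; split; apply/eqP; ring.

Lemma conj_hadamard1 : conj_by hadamard_unnormalized 1%:M = 2 *: 1%:M.
Proof. solve_mx2. Qed.
Lemma conj_hadamardX : conj_by hadamard_unnormalized (pauliX R) = 2 *: pauliZ R.
Proof. solve_mx2. Qed.
Lemma conj_hadamardZ : conj_by hadamard_unnormalized (pauliZ R) = 2 *: pauliX R.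
Proof. solve_mx2. Qed.
Lemma conj_phaseX : conj_by (phaseS R) (pauliX R) = (-1) *: pauliY R.
Proof. solve_mx2. Qed.
Lemma conj_phaseY : conj_by (phaseS R) (pauliY R) = pauliX R.
Proof. solve_mx2. Qed.

Definition clifford_similar (M N : 'M[C]_2) :=
  exists2 V, clifford1 V & exists2 s : R, s * s = 1 & conj_by V M = (s%:C)%C *: N.

Lemma clifford_similar_trans M N K :
  clifford_similar M N -> clifford_similar N K -> clifford_similar M K.
Proof.
move=> [V1 cV1 [s1 s1s1 e1]] [V2 cV2 [s2 s2s2 e2]].
exists (V1 *m V2); first exact: cliff_mul.
exists (s1 * s2); first by rewrite mulrACA s1s1 s2s2 mulr1.
by rewrite conj_byM e1 conj_byZ e2 scalerA -rmorphM.
Qed.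

Lemma clifford_similar_hadamard M N :
  conj_by hadamard_unnormalized M = 2 *: N -> clifford_similar M N.
Proof.
move=> e; exists (hadamard R); first exact: cliff_H.
by exists 1; rewrite ?mulr1 // scale1r; exact: conj_by_hadamard.
Qed.

Lemma clifford_similar1 : clifford_similar 1%:M 1%:M.
Proof.
have e := conj_by_hadamard conj_hadamard1.
exists (hadamard R *m hadamard R); first by apply: cliff_mul; exact: cliff_H.
by exists 1; rewrite ?mulr1 // scale1r conj_byM !e.
Qed.

Lemma clifford_similarXZ : clifford_similar (pauliX R) (pauliZ R).
Proof. exact/clifford_similar_hadamard/conj_hadamardX. Qed.

Lemma clifford_similarZX : clifford_similar (pauliZ R) (pauliX R).
Proof. exact/clifford_similar_hadamard/conj_hadamardZ. Qed.

Lemma clifford_similarXY : clifford_similar (pauliX R) (pauliY R).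
Proof.
exists (phaseS R); first exact: cliff_S.
exists (-1); first by rewrite mulrNN mulr1.
by rewrite conj_phaseX; congr (_ *: _); apply/eqP; rewrite eq_complex /= oppr0 !eqxx.
Qed.

Lemma clifford_similarYX : clifford_similar (pauliY R) (pauliX R).
Proof.
exists (phaseS R); first exact: cliff_S.
by exists 1; rewrite ?mulr1 // scale1r conj_phaseY.
Qed.

Lemma clifford_similar_pauli1 (a b : 'I_4) :
  (a == 0) = (b == 0) -> clifford_similar (pauli1 R a) (pauli1 R b).
Proof.
case: a b => [[|[|[|[|//]]]] ?] [[|[|[|[|//]]]] ?] //= _; rewrite /pauli1 /=.
- exact: clifford_similar1.
- exact: clifford_similar_trans clifford_similarXZ clifford_similarZX.
- exact: clifford_similarXY.
- exact: clifford_similarXZ.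
- exact: clifford_similarYX.
- exact: clifford_similar_trans clifford_similarYX clifford_similarXY.
- exact: clifford_similar_trans clifford_similarYX clifford_similarXZ.
- exact: clifford_similarZX.
- exact: clifford_similar_trans clifford_similarZX clifford_similarXY.
- exact: clifford_similar_trans clifford_similarZX clifford_similarXZ.
Qed.

Lemma pauli1_orthogonality (a b a' b' : 'I_2) :
  \sum_(c < 4) pauli1 R c a b * Num.conj (pauli1 R c a' b')
  = 2 * ((a == a')%:R * (b == b')%:R).
Proof.
rewrite !big_ord_recl big_ord0 /=.
by case: (ord2_cases a) => ->; case: (ord2_cases b) => ->;
  case: (ord2_cases a') => ->; case: (ord2_cases b') => ->;
  rewrite /= !mxE /=; apply/eqP; rewrite eq_complex /=;
  apply/andP; split; apply/eqP; ring.
Qed.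

Lemma trace_pauli1 (c : 'I_4) : c != 0 -> \sum_(x < 2) pauli1 R c x x = 0.
Proof.
case: c => [[|[|[|[|//]]]] ?] //= _; rewrite big_ord2 !mxE /=;
  apply/eqP; rewrite eq_complex /=; apply/andP; split; apply/eqP; ring.
Qed.

End PauliAlgebra.

Lemma sum_delta (K : pzSemiRingType) (I : finType) (i : I) (F : I -> K) :
  \sum_j (i == j)%:R * F j = F i.
Proof.
rewrite (bigD1 i) //= eqxx mul1r big1 ?addr0 // => j /negbTE.
by rewrite eq_sym => ->; rewrite mul0r.
Qed.

Lemma sum_enum_val (K : nmodType) (T : finType) (F : T -> K) :
  \sum_(i < #|T|) F (enum_val i) = \sum_x F x.
Proof. by rewrite -big_enum_val. Qed.

Section Tensor.
Variables (R : realType) (n : nat).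
Local Notation C := (R[i]).

Lemma tensor_mulmx (V W : 'I_n -> 'M[C]_2) :
  tensor V *m tensor W = tensor (fun k => V k *m W k).
Proof.
apply/matrixP => i j; rewrite !mxE.
under eq_bigr do rewrite !mxE -big_split /=.
rewrite -(big_enum_val (fun y : qconf n => \prod_k (V k ((enum_val i : qconf n) k) (y k) *
   W k (y k) ((enum_val j : qconf n) k)))) /=.
rewrite -(bigA_distr_bigA (fun k c => V k ((enum_val i : qconf n) k) c *
   W k c ((enum_val j : qconf n) k))) /=.
by apply: eq_bigr => k _; rewrite mxE.
Qed.

Lemma adj_tensor (V : 'I_n -> 'M[C]_2) : adj (tensor V) = tensor (fun k => adj (V k)).
Proof.
by apply/matrixP => i j; rewrite !mxE rmorph_prod; apply: eq_bigr => k _; rewrite !mxE.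
Qed.

Lemma tensorZ (s : 'I_n -> C) (V : 'I_n -> 'M[C]_2) :
  tensor (fun k => s k *: V k) = (\prod_k s k) *: tensor V.
Proof.
by apply/matrixP => i j; rewrite !mxE -big_split; apply: eq_bigr => k _; rewrite !mxE.
Qed.

Lemma clifford_twirl_pauli (p q : {ffun 'I_n -> 'I_4}) :
  (forall k, (p k == 0) = (q k == 0)) ->
  exists2 V : 'I_n -> 'M[C]_2, (forall k, clifford1 (V k)) &
  forall rho : op R n,
    complex.Re (\tr (pauli R p *m (tensor V *m rho *m adj (tensor V)))) ^+ 2 =
    complex.Re (\tr (pauli R q *m rho)) ^+ 2.
Proof.
move=> pq.
have /fin_all_exists [f f_similar] : forall k, exists Vs : 'M[C]_2 * R,
    [/\ clifford1 Vs.1, Vs.2 * Vs.2 = 1 &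
        conj_by Vs.1 (pauli1 R (p k)) = ((Vs.2)%:C)%C *: pauli1 R (q k)].
  by move=> k; have [V cV [s ss e]] := clifford_similar_pauli1 R (pq k); exists (V, s).
exists (fun k => (f k).1) => [k | rho]; first by case: (f_similar k).
set T := tensor _.
have -> : \tr (pauli R p *m (T *m rho *m adj T)) = \tr (conj_by T (pauli R p) *m rho).
  by rewrite /conj_by mulmxA mxtrace_mulC !mulmxA.
have -> : conj_by T (pauli R p) = (\prod_k ((f k).2%:C)%C) *: pauli R q.
  rewrite /conj_by /T /pauli adj_tensor !tensor_mulmx -tensorZ.
  by congr tensor; apply: funext => k; case: (f_similar k).
rewrite -scalemxAl mxtraceZ -rmorph_prod Re_realM exprMn.
suff -> : (\prod_k (f k).2) ^+ 2 = 1 by rewrite mul1r.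
by rewrite expr2 -big_split /=; apply: big1 => k _; case: (f_similar k).
Qed.

End Tensor.

Section Subsystems.
Variables (K : comPzRingType) (n : nat).

Definition zero_off (S : {set 'I_n}) (x : qconf n) := forall k, k \notin S -> x k = ord0.

Lemma cfg_zero_off S (a : cfg S) : zero_off S (val a).
Proof. by move=> k kS; case: a => x /= /forallP /(_ k); rewrite kS => /eqP. Qed.

Lemma restr_subproof (S : {set 'I_n}) (x : qconf n) :
  [forall k, (k \notin S) ==> ([ffun k => if k \in S then x k else ord0] k == ord0)].
Proof. by apply/forallP => k; apply/implyP => kS; rewrite ffunE (negbTE kS). Qed.

Definition restr (S : {set 'I_n}) (x : qconf n) : cfg S :=
  exist _ [ffun k => if k \in S then x k else ord0] (restr_subproof S x).

Lemma restr_valK S : cancel val (restr S).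
Proof.
move=> a; apply/val_inj/ffunP => k; rewrite /= ffunE.
by case: ifP => // /negbT /(cfg_zero_off a) ->.
Qed.

Lemma sum_cfg (S : {set 'I_n}) (G : qconf n -> K) :
  \sum_(a : cfg S) G (val a) =
  \sum_(x : qconf n | [forall k, (k \notin S) ==> (x k == ord0)]) G x.
Proof.
rewrite (reindex (fun a : cfg S => val a)) /=; last first.
  exists (restr S) => x xS; first exact: restr_valK.
  apply/ffunP => k; rewrite /= ffunE; case: ifP => // /negbT kS.
  by move: xS; rewrite inE => /forallP /(_ k); rewrite kS => /eqP.
by apply: eq_bigl => a; rewrite (valP a).
Qed.

Lemma sum_qconf_join (A : {set 'I_n}) (F : qconf n -> K) :
  \sum_x F x = \sum_(a : cfg A) \sum_(b : cfg (~: A)) F (join A (val a) (val b)).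
Proof.
rewrite pair_big /= (reindex (fun ab : cfg A * cfg (~: A) => join A (val ab.1) (val ab.2))).
  by apply: eq_bigl.
exists (fun x => (restr A x, restr (~: A) x)) => [[a b] _ | x _].
  congr pair; apply/val_inj/ffunP => k; rewrite /= !ffunE.
    by case: (boolP (k \in A)) => kA //=; rewrite (cfg_zero_off a kA).
  rewrite !inE; case: (boolP (k \in A)) => kA //=.
  by rewrite (cfg_zero_off b) // !inE kA.
apply/ffunP => k; rewrite !ffunE /=; case: (boolP (k \in A)) => kA //=.
by rewrite ?ffunE !inE kA.
Qed.

Lemma prod_eq_on (S : {set 'I_n}) (x y : qconf n) : zero_off S x -> zero_off S y ->
  \prod_k (if k \in S then ((x k == y k)%:R : K) else 1) = (x == y)%:R.
Proof.
move=> x0 y0; have [->|xy] := eqVneq x y.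
  by apply: big1 => k _; rewrite eqxx; case: ifP.
have [k xyk] : exists k, x k != y k.
  by apply/existsP; apply: contraNT xy => /existsPn xy; apply/eqP/ffunP => k; exact/eqP/negPn.
have kS : k \in S by apply: contraNT xyk => kS; rewrite x0 // y0.
by rewrite (bigD1 k) //= kS (negbTE xyk) mul0r.
Qed.

Lemma sum_prod_zero_off (J : finType) (j0 : J) (S : {set 'I_n}) (f : 'I_n -> J -> K) :
  \sum_(q : {ffun 'I_n -> J} | [forall k, (k \notin S) ==> (q k == j0)]) \prod_k f k (q k)
  = \prod_k (if k \in S then \sum_c f k c else f k j0).
Proof.
pose g k c := if k \in S then f k c else (c == j0)%:R * f k c.
transitivity (\prod_k \sum_c g k c); last first.
  apply: eq_bigr => k _; rewrite /g; case: ifP => // _.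
  rewrite (bigD1 j0) //= eqxx mul1r big1 ?addr0 // => c /negbTE ->; by rewrite mul0r.
rewrite bigA_distr_bigA big_mkcond /=; apply: eq_bigr => q _.
case: ifP => [/forallP q0 | /negbT].
  apply: eq_bigr => k _; rewrite /g; case: ifP => // kS.
  by move: (q0 k); rewrite kS /= => /eqP ->; rewrite eqxx mul1r.
rewrite negb_forall => /existsP [k]; rewrite negb_imply => /andP [kS qk].
by rewrite (bigD1 k) //= /g (negbTE kS) (negbTE qk) !mul0r.
Qed.

End Subsystems.

Section PauliCoefficients.
Variables (R : realType) (n : nat) (A : {set 'I_n}).
Local Notation C := (R[i]).

Definition pauli_entry (q : {ffun 'I_n -> 'I_4}) (x y : qconf n) : C :=
  \prod_k pauli1 R (q k) (x k) (y k).

Definition sub_conf (i : 'I_#|{: cfg A}|) : qconf n := val (enum_val i : cfg A).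

(* [pauli_coef q M] is Tr (q_A M), where q_A is the Pauli string q restricted
   to the qubits in A and M is an operator on A. *)
Definition pauli_coef q (M : 'M[C]_#|{: cfg A}|) : C :=
  \sum_i \sum_j pauli_entry q (sub_conf i) (sub_conf j) * M j i.

Lemma supp_subsetE (q : {ffun 'I_n -> 'I_4}) (S : {set 'I_n}) :
  (supp q \subset S) = [forall k, (k \notin S) ==> (q k == 0)].
Proof.
apply/fintype.subsetP/forall_inP => [qS k kS | q0 k].
  by apply: contraNT kS => qk; apply: qS; rewrite inE.
by rewrite inE; case: (boolP (k \in S)) => // /q0 ->.
Qed.

Lemma sub_conf_eq i j : (sub_conf i == sub_conf j) = (i == j).
Proof. by apply/eqP/eqP => [/val_inj/enum_val_inj|->]. Qed.

Lemma pauli_entry_orthogonality i j i' j' :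
  \sum_(q : {ffun 'I_n -> 'I_4} | supp q \subset A)
     pauli_entry q (sub_conf i) (sub_conf j) *
     Num.conj (pauli_entry q (sub_conf i') (sub_conf j'))
  = 2 ^+ #|A| * ((i == i')%:R * (j == j')%:R).
Proof.
have zA (l : 'I_#|{: cfg A}|) := cfg_zero_off (enum_val l : cfg A).
under eq_bigl do rewrite supp_subsetE.
under eq_bigr do rewrite /pauli_entry rmorph_prod -big_split /=.
rewrite (sum_prod_zero_off 0 A (fun k c => pauli1 R c (sub_conf i k) (sub_conf j k) *
   Num.conj (pauli1 R c (sub_conf i' k) (sub_conf j' k)))).
transitivity (\prod_k ((if k \in A then 2 else 1) *
   ((if k \in A then ((sub_conf i k == sub_conf i' k)%:R : C) else 1) *
    (if k \in A then ((sub_conf j k == sub_conf j' k)%:R : C) else 1)))).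
  apply: eq_bigr => k _; case: ifP => kA; first by rewrite pauli1_orthogonality.
  by rewrite /sub_conf !(zA _ _ (negbT kA)) !mxE !mul1r rmorph1.
rewrite big_split /= big_split /= -big_mkcond prodr_const /=.
by rewrite !prod_eq_on ?sub_conf_eq //; exact: zA.
Qed.

Lemma pauli_coef_parseval (M : 'M[C]_#|{: cfg A}|) :
  \sum_(q : {ffun 'I_n -> 'I_4} | supp q \subset A)
     pauli_coef q M * Num.conj (pauli_coef q M)
  = 2 ^+ #|A| * \sum_i \sum_j M j i * Num.conj (M j i).
Proof.
have expand q : pauli_coef q M * Num.conj (pauli_coef q M) =
  \sum_i \sum_j \sum_i' \sum_j' (pauli_entry q (sub_conf i) (sub_conf j) *
     Num.conj (pauli_entry q (sub_conf i') (sub_conf j'))) * (M j i * Num.conj (M j' i')).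
  rewrite /pauli_coef mulr_suml; apply: eq_bigr => i _; rewrite mulr_suml.
  apply: eq_bigr => j _; rewrite rmorph_sum mulr_sumr; apply: eq_bigr => i' _.
  rewrite rmorph_sum mulr_sumr; apply: eq_bigr => j' _.
  by rewrite rmorphM mulrACA.
rewrite (eq_bigr _ (fun q _ => expand q)) exchange_big mulr_sumr; apply: eq_bigr => i _.
rewrite exchange_big mulr_sumr; apply: eq_bigr => j _.
rewrite exchange_big /=.
transitivity (\sum_i' (i == i')%:R * \sum_j' (j == j')%:R *
   (2 ^+ #|A| * (M j i * Num.conj (M j' i')))); last by rewrite !sum_delta.
apply: eq_bigr => i' _.
rewrite exchange_big mulr_sumr; apply: eq_bigr => j' _.
by rewrite -mulr_suml pauli_entry_orthogonality; ring.
Qed.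

Lemma pauli_entry_join q (a a' : cfg A) (b b' : cfg (~: A)) : supp q \subset A ->
  pauli_entry q (join A (val a) (val b)) (join A (val a') (val b'))
  = pauli_entry q (val a) (val a') * (b == b')%:R.
Proof.
rewrite supp_subsetE => /forall_inP qA.
rewrite /pauli_entry -(prod_eq_on _ (cfg_zero_off b) (cfg_zero_off b')).
rewrite -big_split /=; apply: eq_bigr => k _; rewrite !ffunE !inE.
case: (boolP (k \in A)) => kA /=; first by rewrite mulr1.
by rewrite (eqP (qA k kA)) (cfg_zero_off a kA) (cfg_zero_off a' kA) /= !mxE eqxx mul1r.
Qed.

Lemma trace_pauli_ptrace q (rho : op R n) : supp q \subset A ->
  \tr (pauli R q *m rho) = pauli_coef q (ptrace A rho).
Proof.
move=> qA.
transitivity (\sum_x \sum_y pauli_entry q x y * rho (enum_rank y) (enum_rank x)).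
  rewrite /mxtrace -[RHS]sum_enum_val; apply: eq_bigr => i _.
  rewrite mxE -[RHS]sum_enum_val; apply: eq_bigr => l _.
  by rewrite !mxE !enum_valK.
under eq_bigr do rewrite (sum_qconf_join A).
rewrite (sum_qconf_join A).
transitivity (\sum_(a : cfg A) \sum_(b : cfg (~: A)) \sum_(a' : cfg A)
  pauli_entry q (val a) (val a') *
  rho (enum_rank (join A (val a') (val b))) (enum_rank (join A (val a) (val b)))).
  apply: eq_bigr => a _; apply: eq_bigr => b _; apply: eq_bigr => a' _.
  under eq_bigr do rewrite pauli_entry_join // -mulrA.
  by rewrite (eq_bigr _ (fun b' _ => mulrCA _ _ _)) sum_delta.
rewrite /pauli_coef -sum_enum_val; apply: eq_bigr => i _; rewrite exchange_big -sum_enum_val.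
by apply: eq_bigr => j _; rewrite mxE mulr_sumr.
Qed.

Lemma pauli_coefD q (M N : 'M[C]_#|{: cfg A}|) :
  pauli_coef q (M + N) = pauli_coef q M + pauli_coef q N.
Proof.
rewrite /pauli_coef -big_split; apply: eq_bigr => i _; rewrite -big_split.
by apply: eq_bigr => j _; rewrite mxE mulrDr.
Qed.

Lemma pauli_coef_scalar (q : {ffun 'I_n -> 'I_4}) (c : C) k0 :
  k0 \in A -> q k0 != 0 -> pauli_coef q c%:M = 0.
Proof.
move=> k0A qk0.
transitivity (c * \sum_(a : cfg A) pauli_entry q (val a) (val a)).
  rewrite -sum_enum_val mulr_sumr /pauli_coef; apply: eq_bigr => i _.
  rewrite mulrC -[RHS](sum_delta i (fun j => pauli_entry q (sub_conf i) (sub_conf j) * c)).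
  by apply: eq_bigr => j _; rewrite mxE eq_sym mulrnAr mulr_natl.
rewrite (sum_cfg A (fun x => pauli_entry q x x)) /pauli_entry.
rewrite (sum_prod_zero_off ord0 A (fun k x => pauli1 R (q k) x x)).
by rewrite (bigD1 k0) //= k0A trace_pauli1 // mul0r mulr0.
Qed.

Lemma sum_pauli_sqr_le_DHS (rho : op R n) k0 : k0 \in A ->
  \sum_(q : {ffun 'I_n -> 'I_4} | supp q == A) complex.Re (\tr (pauli R q *m rho)) ^+ 2
  <= 2 ^+ #|A| * DHS (ptrace A rho) ^+ 2.
Proof.
move=> k0A; set c : C := (2 ^ #|A|)%:R^-1; set M := ptrace A rho - c%:M.
have trE q : supp q = A -> \tr (pauli R q *m rho) = pauli_coef q M.
  move=> qA; have qk0 : q k0 != 0 by move: k0A; rewrite -qA inE.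
  rewrite trace_pauli_ptrace ?qA // -[ptrace A rho](subrK c%:M) pauli_coefD.
  by rewrite (@pauli_coef_scalar q c k0 k0A qk0) addr0.
have Re_sqr_ge0 (z : C) : 0 <= complex.Re (z * Num.conj z).
  by rewrite Re_mul_conj addr_ge0 ?sqr_ge0.
apply: (@le_trans _ _ (\sum_(q : {ffun 'I_n -> 'I_4} | supp q \subset A)
   complex.Re (pauli_coef q M * Num.conj (pauli_coef q M)))).
  rewrite [X in _ <= X]big_mkcond [X in X <= _]big_mkcond /=; apply: ler_sum => q _.
  case: eqP => [qA | _]; last by case: ifP => // _; exact: Re_sqr_ge0.
  by rewrite qA subxx trE // Re_mul_conj lerDl sqr_ge0.
rewrite -raddf_sum pauli_coef_parseval -(rmorph_nat (real_complex R) 2) -rmorphXn.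
rewrite /= Re_realM /DHS frob_sqr Re_trace_mul_adj raddf_sum.
under eq_bigr do rewrite raddf_sum.
exact: lexx.
Qed.

End PauliCoefficients.

Lemma card_supp_eq n (A : {set 'I_n}) :
  #|[pred q : {ffun 'I_n -> 'I_4} | supp q == A]| = (3 ^ #|A|)%N.
Proof.
transitivity #|pffun_on (0 : 'I_4) A (predC1 0)|; last first.
  by rewrite card_pffun_on cardC1 card_ord.
apply: eq_card => q; rewrite [in LHS]inE; apply/eqP/pfamilyP => [<- | [qA q0]].
  by split=> [|k]; [apply/fintype.subsetP => k | ]; rewrite !inE.
apply/setP => k; rewrite inE; apply/idP/idP => [qk | kA]; last by have := q0 k kA; rewrite inE.
by apply: (fintype.subsetP qA); rewrite inE.
Qed.

Local Open Scope classical_set_scope.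

Section MeasurableMatrices.
Context {R : realType} {d : measure_display} {T : measurableType d}.
Local Notation C := (R[i]).

Definition measurable_cplx (f : T -> C) :=
  measurable_fun setT (fun x => complex.Re (f x)) /\
  measurable_fun setT (fun x => complex.Im (f x)).

Definition measurable_mx a b (G : T -> 'M[C]_(a, b)) :=
  forall i j, measurable_cplx (fun x => G x i j).

Lemma measurable_cplx_cst c : measurable_cplx (fun _ => c).
Proof. by split; exact: measurable_cst. Qed.

Lemma measurable_cplxB f g :
  measurable_cplx f -> measurable_cplx g -> measurable_cplx (fun x => f x - g x).
Proof.
move=> [f1 f2] [g1 g2]; split.
  by under eq_fun do rewrite raddfB; exact: measurable_funB.
by under eq_fun do rewrite raddfB; exact: measurable_funB.
Qed.

Lemma measurable_cplxM f g :
  measurable_cplx f -> measurable_cplx g -> measurable_cplx (fun x => f x * g x).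
Proof.
have ReM (x y : C) : complex.Re (x * y) =
  complex.Re x * complex.Re y - complex.Im x * complex.Im y by case: x; case: y.
have ImM (x y : C) : complex.Im (x * y) =
  complex.Re x * complex.Im y + complex.Im x * complex.Re y.
  by case: x => a b; case: y => c e /=; ring.
move=> [f1 f2] [g1 g2]; split.
  by under eq_fun do rewrite ReM; apply: measurable_funB; exact: measurable_funM.
by under eq_fun do rewrite ImM; apply: measurable_funD; exact: measurable_funM.
Qed.

Lemma measurable_cplx_conj f : measurable_cplx f -> measurable_cplx (fun x => Num.conj (f x)).
Proof.
have ReJ (z : C) : complex.Re (Num.conj z) = complex.Re z by case: z.
have ImJ (z : C) : complex.Im (Num.conj z) = - complex.Im z by case: z.
move=> [f1 f2]; split; first by under eq_fun do rewrite ReJ.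
by under eq_fun do rewrite ImJ; exact: measurableT_comp.
Qed.

Lemma measurable_cplx_sum (I : finType) (F : I -> T -> C) :
  (forall i, measurable_cplx (F i)) -> measurable_cplx (fun x => \sum_i F i x).
Proof.
move=> mF; split; under eq_fun do rewrite raddf_sum;
  by apply: measurable_sum => i; case: (mF i).
Qed.

Lemma measurable_mx_cst a b (M : 'M[C]_(a, b)) : measurable_mx (fun _ => M).
Proof. by move=> i j; exact: measurable_cplx_cst. Qed.

Lemma measurable_mxB a b (G H : T -> 'M[C]_(a, b)) :
  measurable_mx G -> measurable_mx H -> measurable_mx (fun x => G x - H x).
Proof.
move=> mG mH i j; under eq_fun do rewrite !mxE.
exact: measurable_cplxB.
Qed.

Lemma measurable_mxM a b c (G : T -> 'M[C]_(a, b)) (H : T -> 'M[C]_(b, c)) :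
  measurable_mx G -> measurable_mx H -> measurable_mx (fun x => G x *m H x).
Proof.
move=> mG mH i j; under eq_fun do rewrite mxE.
by apply: measurable_cplx_sum => k; exact: measurable_cplxM.
Qed.

Lemma measurable_mx_adj a b (G : T -> 'M[C]_(a, b)) :
  measurable_mx G -> measurable_mx (fun x => adj (G x)).
Proof.
move=> mG i j; under eq_fun do rewrite !mxE.
exact: measurable_cplx_conj.
Qed.

Lemma measurable_cplx_trace a (G : T -> 'M[C]_a) :
  measurable_mx G -> measurable_cplx (fun x => \tr (G x)).
Proof. by move=> mG; apply: measurable_cplx_sum. Qed.

Lemma measurable_mx_ptrace n (A : {set 'I_n}) (G : T -> op R n) :
  measurable_mx G -> measurable_mx (fun x => ptrace A (G x)).
Proof.
move=> mG i j; under eq_fun do rewrite mxE.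
by apply: measurable_cplx_sum.
Qed.

End MeasurableMatrices.

Section GeneratedSigmaAlgebra.
Variables (R : realType) (n : nat).

(* [g_sigma_algebraType] needs a pointed carrier; matrices have no canonical point. *)
Definition op_pointed : Type := op R n.
HB.instance Definition _ := Choice.copy op_pointed (op R n).
HB.instance Definition _ := isPointed.Build op_pointed (0 : op R n).
Definition op_meas := g_sigma_algebraType (@op_gen R n : set (set op_pointed)).

Lemma measurable_mx_id : measurable_mx (fun M : op_meas => (M : op R n)).
Proof.
move=> i j; split => _ B mB; rewrite setTI; apply: sub_sigma_algebra.
  by exists i, j, B; split => //; left.
by exists i, j, B; split => //; right.
Qed.

Lemma measurable_fun_op_meas d (T : measurableType d) (G : T -> op_meas) :
  measurable_mx (fun x => G x : op R n) -> measurable_fun setT G.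
Proof.
move=> mG; apply: (measurability (@op_gen R n : set (set op_meas))) => //.
move=> _ [_ [i [j [B [mB [->|->]]]]] <-].
  exact: (mG i j).1 measurableT B mB.
exact: (mG i j).2 measurableT B mB.
Qed.

End GeneratedSigmaAlgebra.

Local Open Scope ereal_scope.

Lemma ge0_integral_same_distribution (R : realType) d d' (T : measurableType d)
    (V : measurableType d') (mu : measure T R) (X Y : T -> V) (F : V -> R) :
  measurable_fun setT X -> measurable_fun setT Y ->
  (forall S, measurable S -> mu (X @^-1` S) = mu (Y @^-1` S)) ->
  measurable_fun setT F -> (forall v, (0 <= F v)%R) ->
  \int[mu]_w (F (X w))%:E = \int[mu]_w (F (Y w))%:E.
Proof.
move=> mX mY XY mF F0.
have mEF : measurable_fun [set: V] (EFin \o F) by apply/measurable_EFinP.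
have EF0 : {in setT, forall v, 0 <= (F v)%:E} by move=> v _; rewrite lee_fin.
have := ge0_integral_pushforward mX mu measurableT mEF EF0.
have := ge0_integral_pushforward mY mu measurableT mEF EF0.
rewrite !preimage_setT => <- <-.
by apply: eq_measure_integral => S mS _; exact: XY.
Qed.

Section Expectations.
Variables (R : realType) (n : nat) (rho0 : op R n).
Variables (d : measure_display) (Omega : measurableType d) (P : probability Omega R).
Variable U : Omega -> op R n.
Hypothesis mU : random_op U.

Definition evolve (M : op_meas R n) : op R n := M *m rho0 *m adj M.

Definition pauli_sqr (q : {ffun 'I_n -> 'I_4}) (M : op_meas R n) : R :=
  complex.Re (\tr (pauli R q *m evolve M)) ^+ 2.

Definition DHS_sqr (A : {set 'I_n}) (M : op_meas R n) : R :=
  DHS (ptrace A (evolve M)) ^+ 2.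

Lemma measurable_mx_evolve : measurable_mx evolve.
Proof.
apply: measurable_mxM; last exact/measurable_mx_adj/measurable_mx_id.
exact/measurable_mxM/measurable_mx_cst/measurable_mx_id.
Qed.

Lemma measurable_pauli_sqr q : measurable_fun setT (pauli_sqr q).
Proof.
apply: measurable_funX.
exact: (measurable_cplx_trace (measurable_mxM (measurable_mx_cst _) measurable_mx_evolve)).1.
Qed.

Lemma measurable_DHS_sqr A : measurable_fun setT (DHS_sqr A).
Proof.
rewrite /DHS_sqr /DHS; under eq_fun do rewrite frob_sqr.
apply: (measurable_cplx_trace (measurable_mxM _ (measurable_mx_adj _))).1;
  apply/measurable_mxB/measurable_mx_cst/measurable_mx_ptrace/measurable_mx_evolve.
Qed.

Lemma measurable_U : measurable_fun setT (U : Omega -> op_meas R n).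
Proof. exact: measurable_fun_op_meas. Qed.

Lemma expectation_pauli_sqr_same_supp (p q : {ffun 'I_n -> 'I_4}) :
  locally_scrambling P U -> supp q = supp p ->
  \int[P]_w (pauli_sqr q (U w))%:E = \int[P]_w (pauli_sqr p (U w))%:E.
Proof.
move=> scrambling qp.
have pq k : (p k == 0%R) = (q k == 0%R).
  by apply: negb_inj; move/setP/(_ k): qp; rewrite !inE => ->.
have [V cliffV twirl] := clifford_twirl_pauli R pq.
have {}twirl w : pauli_sqr p (tensor V *m U w) = pauli_sqr q (U w).
  by rewrite /pauli_sqr /evolve -twirl adjM !mulmxA.
under eq_integral do rewrite -twirl.
apply: ge0_integral_same_distribution (measurable_pauli_sqr p) _ => //.
- exact/measurable_fun_op_meas/measurable_mxM/mU/measurable_mx_cst.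
- exact: measurable_U.
- exact: scrambling.
- by move=> M; exact: sqr_ge0.
Qed.

Lemma sum_expectation_pauli_sqr_le (A : {set 'I_n}) k0 : k0 \in A ->
  \sum_(q : {ffun 'I_n -> 'I_4} | supp q == A) \int[P]_w (pauli_sqr q (U w))%:E
  <= (2 ^+ #|A|)%:E * \int[P]_w (DHS_sqr A (U w))%:E.
Proof.
move=> k0A.
have mpauli q : measurable_fun setT (fun w => (pauli_sqr q (U w))%:E).
  exact/measurable_EFinP/(measurableT_comp (measurable_pauli_sqr q) measurable_U).
have mDHS : measurable_fun setT (fun w => (DHS_sqr A (U w))%:E).
  exact/measurable_EFinP/(measurableT_comp (measurable_DHS_sqr A) measurable_U).
rewrite -big_filter -ge0_integral_sum //; last by move=> q w _; rewrite lee_fin sqr_ge0.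
rewrite -ge0_integralZl_EFin //; last by move=> w _; rewrite lee_fin sqr_ge0.
apply: ge0_le_integral => //.
- by move=> w _; rewrite sumEFin lee_fin sumr_ge0 // => q _; rewrite sqr_ge0.
- by apply: emeasurable_sum.
- exact: measurable_funeM.
move=> w _; rewrite sumEFin big_filter -EFinM lee_fin.
exact: (sum_pauli_sqr_le_DHS (evolve (U w)) k0A).
Qed.

End Expectations.

Unset Implicit Arguments.

Theorem theorem1 (R : realType) (n : nat) (rho0 : op R n)
  (d : measure_display) (Omega : measurableType d) (P : probability Omega R)
  (U : Omega -> op R n) (p : {ffun 'I_n -> 'I_4}) :
  density rho0 ->
  unitary_ensemble P U ->
  locally_scrambling P U ->
  p != [ffun => 0%R] ->
  let rho := fun w => U w *m rho0 *m adj (U w) in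
  let A := supp p in
  \int[P]_w ((complex.Re (\tr (pauli R p *m rho w))) ^+ 2)%:E
  <= (((2 / 3 : R) ^+ #|A|)%:E *
      \int[P]_w ((@DHS R n A (ptrace A (rho w))) ^+ 2)%:E).
Proof.
move=> _ [mU _] scrambling p_neq0; cbv beta zeta; set A := supp p.
have [k0 k0A] : exists k0, k0 \in A.
  apply/existsP; apply: contraNT p_neq0 => /existsPn A0; apply/eqP/ffunP => k.
  by have := A0 k; rewrite !inE ffunE negbK => /eqP.
have := sum_expectation_pauli_sqr_le rho0 P mU k0A.
rewrite (eq_bigr (fun=> \int[P]_w (pauli_sqr rho0 p (U w))%:E)); last first.
  by move=> q /eqP qA; exact: expectation_pauli_sqr_same_supp.
rewrite sumr_const card_supp_eq => le_sum.
have -> : ((2 / 3 : R) ^+ #|A| = (3 ^+ #|A|)^-1 * 2 ^+ #|A|)%R by rewrite expr_div_n mulrC.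
by rewrite EFinM -muleA lee_pdivlMl ?exprn_gt0 // -natrX mule_natl.
Qed.
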